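(* Let $q$ be a power of $2$. In $\mathrm{AG}(3,q^2)$ with affine coordinates $x,y,z$, homogeneous coordinates $J,X,Y,Z$ and plane at infinity $\Sigma_\infty:J=0$, let $\mathcal H$ be the Hermitian surface $z^q+z=x^{q+1}+y^{q+1}$, let $P_\infty=(0,0,0,1)$, and let $\mathcal Q$ be a hyperbolic quadric with affine equation $z=ax^2+by^2+cxy+dx+ey+f$, $a,\dots,f\in\mathrm{GF}(q^2)$, such that $\mathcal Q\cap\mathcal H\cap\Sigma_\infty=\{P_\infty\}$. Let $\Xi_\infty$ be the quadric of $\mathrm{PG}(3,q)$ defined below. If $\Xi_\infty$ has rank $2$, then $\Xi_\infty$ is a line, i.e. it is the union of two conjugate planes defined over $\mathrm{GF}(q^2)$ but not over $\mathrm{GF}(q)$, whose set of points in $\mathrm{PG}(3,q)$ is a line.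
   Context: Fix $\nu\in\mathrm{GF}(q)\setminus\{1\}$ with absolute trace $\mathrm{Tr}_q(\nu)=\nu+\nu^2+\dots+\nu^{q/2}=1$, and $\varepsilon\in\mathrm{GF}(q^2)\setminus\mathrm{GF}(q)$ with $\varepsilon^2+\varepsilon+\nu=0$. Write each $t\in\mathrm{GF}(q^2)$ as $t=t_0+t_1\varepsilon$ with $t_0,t_1\in\mathrm{GF}(q)$ (so $a=a_0+a_1\varepsilon$, etc.). $\Xi_\infty$ is the quadric of $\mathrm{PG}(3,q)$ in coordinates $(x_0,x_1,y_0,y_1)$ with equation $(a_1+1)x_0^2+x_0x_1+[a_0+(1+\nu)a_1+\nu]x_1^2+(b_1+1)y_0^2+y_0y_1+[b_0+(1+\nu)b_1+\nu]y_1^2+c_1x_0y_0+(c_0+c_1)x_0y_1+(c_0+c_1)x_1y_0+[c_0+(1+\nu)c_1]x_1y_1=0.$ The rank of a quadric is the minimum number of indeterminates appearing in an equation for it under projective changes of coordinates. *)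

From HB Require Import structures.
From mathcomp Require Import all_boot all_order all_algebra all_field.
Set Implicit Arguments. Unset Strict Implicit. Unset Printing Implicit Defensive.
Import GRing.Theory.
Local Open Scope ring_scope.

(* A quadratic form in n indeterminates w_0..w_{n-1} is represented by a
   matrix A, the form being  Q_A(w) = w A w^T = sum_{i,j} A i j w_i w_j.
   As a *polynomial*, Q_A has coefficient A i i on w_i^2 and coefficient
   A i j + A j i on w_i w_j (i <> j).  Two matrices give the same polynomial
   iff [form_eq] holds (this is polynomial, not functional, equality). *)
Definition form_eq (R : ringType) (n : nat) (A B : 'M[R]_n) : Prop :=
  (forall i, A i i = B i i) /\
  (forall i j, i != j -> A i j + A j i = B i j + B j i).

Definition qform (R : comRingType) (n : nat) (A : 'M[R]_n) (v : 'rV[R]_n) : R :=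
  (v *m A *m v^T) ord0 ord0.

Definition var_appears (R : ringType) (n : nat) (A : 'M[R]_n) (i : 'I_n) : bool :=
  (A i i != 0) || [exists j, (j != i) && (A i j + A j i != 0)].

Definition nvars (R : ringType) (n : nat) (A : 'M[R]_n) : nat :=
  #|[set i | var_appears A i]|.

(* Projective change of coordinates v = w M (M invertible) turns Q_A into
   Q_{M A M^T}.  The rank is the minimum number of indeterminates appearing. *)
Definition qf_rank_is (F : fieldType) (n : nat) (A : 'M[F]_n) (k : nat) : Prop :=
  (exists M : 'M[F]_n, M \in unitmx /\ nvars (M *m A *m M^T) = k) /\
  (forall M : 'M[F]_n, M \in unitmx -> (k <= nvars (M *m A *m M^T))%N).

(* canonical hyperbolic form w0 w1 + w2 w3 *)
Definition hyp_mx (R : ringType) : 'M[R]_4 :=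
  \matrix_(i, j) (if ((nat_of_ord i == 0%N) && (nat_of_ord j == 1%N)) ||
                     ((nat_of_ord i == 2%N) && (nat_of_ord j == 3%N)) then 1 else 0).

Definition hyperbolic_quadric (K : fieldType) (A : 'M[K]_4) : Prop :=
  exists (M : 'M[K]_4) (lam : K),
    M \in unitmx /\ lam != 0 /\ form_eq (M *m A *m M^T) (lam *: hyp_mx K).

Definition pcoord (R : ringType) (v : 'rV[R]_4) (k : nat) : R := v ord0 (inord k).

(* Coordinates (J, X, Y, Z) = indices 0,1,2,3. *)
(* Q : ZJ = aX^2 + bY^2 + cXY + dXJ + eYJ + fJ^2, i.e. the form
   fJ^2 + dJX + eJY - JZ + aX^2 + cXY + bY^2 *)
Definition Q_mx (K : ringType) (a b c d e f : K) : 'M[K]_4 :=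
  \matrix_(i, j)
    (match nat_of_ord i, nat_of_ord j with
     | 0%N, 0%N => f | 0%N, 1%N => d | 0%N, 2%N => e | 0%N, 3%N => -1
     | 1%N, 1%N => a | 1%N, 2%N => c | 2%N, 2%N => b
     | _, _ => 0 end).

Definition herm_eval (K : ringType) (q : nat) (v : 'rV[K]_4) : K :=
  pcoord v 3 ^+ q * pcoord v 0 + pcoord v 3 * pcoord v 0 ^+ q
  - (pcoord v 1 ^+ q.+1 + pcoord v 2 ^+ q.+1).

Definition P_inf (K : ringType) : 'rV[K]_4 := \row_(i < 4) (if nat_of_ord i == 3%N then 1 else 0).

(* Xi_infty in coordinates (x0, x1, y0, y1) = indices 0,1,2,3 *)
Definition Xi_mx (F : ringType) (nu a0 a1 b0 b1 c0 c1 : F) : 'M[F]_4 :=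
  \matrix_(i, j)
    (match nat_of_ord i, nat_of_ord j with
     | 0%N, 0%N => a1 + 1
     | 0%N, 1%N => 1
     | 1%N, 1%N => a0 + (1 + nu) * a1 + nu
     | 2%N, 2%N => b1 + 1
     | 2%N, 3%N => 1
     | 3%N, 3%N => b0 + (1 + nu) * b1 + nu
     | 0%N, 2%N => c1
     | 0%N, 3%N => c0 + c1
     | 1%N, 2%N => c0 + c1
     | 1%N, 3%N => c0 + (1 + nu) * c1
     | _, _ => 0 end).

Definition frob (K : ringType) (q : nat) (L : 'rV[K]_4) : 'rV[K]_4 :=
  map_mx (fun x => x ^+ q) L.

(* The quadric of PG(3,q) with form A, viewed over K = GF(q^2), is (as a
   polynomial, up to a nonzero scalar) the product of a linear form L and its
   conjugate L^q, where the plane L = 0 is not defined over GF(q)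
   (L^q is not proportional to L). *)
Definition conj_planes_pair (F : fieldType) (K : fieldExtType F) (q : nat)
    (A : 'M[F]_4) : Prop :=
  exists (L : 'rV[K]_4) (lam : K),
    lam != 0 /\
    form_eq (map_mx (fun x : F => x%:A) A) (lam *: (L^T *m frob q L)) /\
    ~ (exists mu : K, frob q L = mu *: L).

Definition points_form_line (F : fieldType) (A : 'M[F]_4) : Prop :=
  exists U : 'M[F]_(2, 4),
    \rank U = 2%N /\ forall v : 'rV[F]_4, qform A v = 0 <-> (v <= U)%MS.

(* Write x = x0 + x1 eps and y = y0 + y1 eps, so that GF(q)^4 becomes K^2 with
   K = GF(q^2).  Then Xi_infty is the GF(q)-quadratic form
     Xi(X, Y) = T(a X^2 + b Y^2 + c X Y) + N(X) + N(Y),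
   T and N being the trace and norm of K/GF(q).  Its radical consists of the (X, Y)
   with X^q = c Y and Y^q = c X; it is nonzero only if N(c) = 1, and then it is a
   GF(q)-plane on which Xi is Y |-> T(kappa Y^2), kappa = b + a^q c^2.  Rank 2 forces
   a totally singular 2-dimensional radical, i.e. N(c) = 1 and kappa = 0, and then
   Xi(X, Y) = g(X + c^q Y^q) with g(W) = Xi(W, 0).  A nonzero zero W of g would give
   the point (0, c W, W^q, 0) of Q and H at infinity, other than P_infty; so g is
   anisotropic.  Hence the points of Xi_infty form the radical, a line, and over K the
   anisotropic binary form g is a norm N(l(W)), which gives the conjugate planes. *)

From HB Require Import structures.
From mathcomp Require Import all_boot all_order all_algebra all_field ring.
Import GRing.Theory.
Local Open Scope ring_scope.

Section Characteristic2.
Context {R : comPzRingType} (char2 : (2 : R) = 0).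

Lemma char2_natr n : (n%:R : R) = (odd n)%:R.
Proof.
rewrite -[in LHS](odd_double_half n) natrD -mul2n natrM char2 mul0r addr0.
by case: (odd n).
Qed.

Lemma char2_Nnatr n : - (n%:R : R) = (odd n)%:R.
Proof.
rewrite -char2_natr; apply: (addrI n%:R).
by rewrite subrr -mulr2n -mulrnA muln2 char2_natr odd_double.
Qed.

Lemma char2_oppr (x : R) : - x = x.
Proof. by apply: (addrI x); rewrite subrr -mulr2n -mulr_natl char2_natr mul0r. Qed.

Lemma char2_addr_eq0 (x y : R) : x + y = 0 -> x = y.
Proof. by move/eqP; rewrite addr_eq0 char2_oppr => /eqP. Qed.

End Characteristic2.

(* [ring2 c2 : rules] proves ring identities modulo [rules] in a ring where
   [c2 : 2 = 0].  [ring] uses its hypotheses as left-to-right rewrite rules, but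
   rewrites a monomial only when its coefficient equals that of the rule, so the
   small integer constants are reduced modulo 2 before and after the [rules]. *)
Tactic Notation "ring2" constr(c2) ":" ne_constr_list(L) :=
  let p2 := constr:(@char2_natr _ c2 2 : 2 = 0 :> _) in
  let p3 := constr:(@char2_natr _ c2 3 : 3 = 1 :> _) in
  let p4 := constr:(@char2_natr _ c2 4 : 4 = 0 :> _) in
  let n1 := constr:(@char2_Nnatr _ c2 1 : -1 = 1 :> _) in
  let n2 := constr:(@char2_Nnatr _ c2 2 : -2 = 0 :> _) in
  let n3 := constr:(@char2_Nnatr _ c2 3 : -3 = 1 :> _) in
  let n4 := constr:(@char2_Nnatr _ c2 4 : -4 = 0 :> _) in
  ring:
    p2 p3 p4 n1 n2 n3 n4
    L
    p2 p3 p4 n1 n2 n3 n4.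
Tactic Notation "ring2" constr(c2) := ring2 c2 : c2.

Lemma char2_sqrD {R : comPzRingType} (char2 : (2 : R) = 0) (x y : R) :
  (x + y) ^+ 2 = x ^+ 2 + y ^+ 2.
Proof. by ring2 char2. Qed.

Lemma char2_exp2D {R : comPzRingType} (char2 : (2 : R) = 0) k (x y : R) :
  (x + y) ^+ (2 ^ k) = x ^+ (2 ^ k) + y ^+ (2 ^ k).
Proof.
elim: k x y => [|k IH] x y; first by rewrite !expr1.
by rewrite expnS !exprM char2_sqrD.
Qed.

Section QuadraticForms.
Variables (R : comNzRingType) (n : nat).
Implicit Types (A : 'M[R]_n) (u v : 'rV[R]_n).

Lemma qformD A u v :
  qform A (u + v) = qform A u + qform A v + (u *m (A + A^T) *m v^T) ord0 ord0.
Proof.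
have vAu : (v *m A *m u^T) ord0 ord0 = (u *m A^T *m v^T) ord0 ord0.
  by rewrite (_ : u *m A^T *m v^T = (v *m A *m u^T)^T) ?mxE // !trmx_mul trmxK mulmxA.
have addE (M N : 'M[R]_1) : (M + N) ord0 ord0 = M ord0 ord0 + N ord0 ord0 by rewrite mxE.
rewrite /qform linearD /= !mulmxDl !mulmxDr mulmxDl !addE vAu; ring.
Qed.

Lemma qform_delta A i : qform A (delta_mx 0 i) = A i i.
Proof. by rewrite /qform -rowE trmx_delta -colE !mxE. Qed.

Lemma polar_delta A i j :
  ((delta_mx 0 i : 'rV_n) *m (A + A^T) *m (delta_mx 0 j : 'rV_n)^T) ord0 ord0 = A i j + A j i.
Proof. by rewrite -rowE trmx_delta -colE !mxE. Qed.

Lemma qform_rank1 (lam : R) (L M : 'rV[R]_n) v :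
  qform (lam *: (L^T *m M)) v = lam * ((v *m L^T) ord0 ord0 * (M *m v^T) ord0 ord0).
Proof. by rewrite /qform -scalemxAr -scalemxAl mxE !mulmxA -(mulmxA _ M) mxE big_ord1. Qed.

End QuadraticForms.

Lemma qform_map (F R : comNzRingType) (f : {rmorphism F -> R}) n (A : 'M[F]_n) v :
  qform (map_mx f A) (map_mx f v) = f (qform A v).
Proof. by rewrite /qform map_trmx -!map_mxM mxE. Qed.

Lemma form_eq_map (F R : comNzRingType) (f : {rmorphism F -> R}) n (A B : 'M[R]_n) :
  (forall w : 'rV[F]_n, qform A (map_mx f w) = qform B (map_mx f w)) -> form_eq A B.
Proof.
move=> eqAB; have diag i : A i i = B i i.
  by rewrite -!qform_delta -(map_delta_mx f) eqAB.
split=> // i j _; apply: (@addrI _ (A i i + A j j)).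
rewrite [in RHS]diag [in RHS]diag -!polar_delta.
rewrite -!(@qform_delta _ _ A) -!(@qform_delta _ _ B) -!qformD.
by rewrite -!(map_delta_mx f) -map_mxD eqAB.
Qed.

Lemma absent_var_radical (F : fieldType) n (A M : 'M[F]_n) k :
  M \in unitmx -> ~~ var_appears (M *m A *m M^T) k ->
  row k M *m (A + A^T) = 0 /\ qform A (row k M) = 0.
Proof.
move=> unitM; rewrite /var_appears negb_or negb_exists => /andP[/negPn/eqP Bkk /forallP Bk].
set B := M *m A *m M^T in Bkk Bk.
have polarB : B + B^T = M *m (A + A^T) *m M^T.
  by rewrite /B mulmxDr mulmxDl !trmx_mul trmxK mulmxA.
have qformB : qform A (row k M) = B k k.
  by rewrite /qform /B -row_mul mxE [in RHS]mxE; apply: eq_bigr => j _; rewrite !mxE.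
clearbody B; have rowB : row k (B + B^T) = 0.
  apply/rowP => j; rewrite !mxE.
  have [->|njk] := eqVneq j k; first by rewrite Bkk addr0.
  by move: (Bk j); rewrite njk negbK => /eqP.
have unitMt : M^T \in unitmx by rewrite unitmx_tr.
split; last by rewrite qformB.
rewrite -(mulmxK unitMt (row k M *m _)) -2!row_mul.
by rewrite -polarB rowB mul0mx.
Qed.

Lemma rank2_radical_pair {F : fieldType} {n} {A M : 'M[F]_n} :
  M \in unitmx -> (nvars (M *m A *m M^T) + 2)%N = n ->
  exists u w : 'rV[F]_n,
    [/\ forall s t : F, s *: u + t *: w = 0 -> s = 0 /\ t = 0,
        u *m (A + A^T) = 0 /\ qform A u = 0 & w *m (A + A^T) = 0 /\ qform A w = 0].
Proof.
move=> unitM; set S := [set i | var_appears (M *m A *m M^T) i] => cardS.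
have /eqP/cards2P[k [l [kl compS]]] : #|~: S| = 2%N.
  by apply/(@addnI #|S|); rewrite cardsC card_ord; exact: esym cardS.
have absent i : i \in [set k; l] -> ~~ var_appears (M *m A *m M^T) i.
  by rewrite -compS !inE.
exists (row k M), (row l M); split; try apply: absent_var_radical => //;
  try by apply: absent; rewrite !inE eqxx ?orbT.
move=> s t st0; pose z : 'rV[F]_n := s *: delta_mx 0 k + t *: delta_mx 0 l.
have /(congr1 (mulmx^~ (invmx M))) : z *m M = 0 by rewrite mulmxDl -!scalemxAl -!rowE.
rewrite mulmxK // mul0mx => /rowP z0; move: (z0 k) (z0 l).
by rewrite !mxE !eqxx (negbTE kl) eq_sym (negbTE kl) /= !mulr1 !mulr0 addr0 add0r.
Qed.

Local Notation o0 := (@Ordinal 4 0 isT).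
Local Notation o1 := (@Ordinal 4 1 isT).
Local Notation o2 := (@Ordinal 4 2 isT).
Local Notation o3 := (@Ordinal 4 3 isT).

Lemma big_ord4 (V : nmodType) (G : 'I_4 -> V) :
  \sum_(i < 4) G i = G o0 + G o1 + G o2 + G o3.
Proof.
rewrite !big_ord_recl big_ord0 addr0 !addrA.
by congr (_ + _ + _ + _); congr G; apply: val_inj.
Qed.

Lemma qform_Q (R : comNzRingType) (a b c d e f : R) (v : 'rV[R]_4) :
  qform (Q_mx a b c d e f) v =
  f * v ord0 o0 ^+ 2 + d * v ord0 o0 * v ord0 o1 + e * v ord0 o0 * v ord0 o2
  - v ord0 o0 * v ord0 o3 + a * v ord0 o1 ^+ 2 + c * v ord0 o1 * v ord0 o2 + b * v ord0 o2 ^+ 2.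
Proof. by rewrite /qform mxE big_ord4 !mxE !big_ord4 !mxE /=; ring. Qed.

Section ArtinSchreier.
Context {F : finFieldType} (char2 : (2 : F) = 0).

Local Notation phi m := (m ^+ 2 + m).

(* [phi] is additive with kernel {0, 1}, so its image has index 2 in F. *)
Lemma artin_schreier_add {x y : F} :
  (forall m, x != phi m) -> (forall m, y != phi m) -> exists m, x + y = phi m.
Proof.
move=> xH' yH'; pose H := [set phi m | m : F].
have phiD (m n : F) : phi (m + n) = phi m + phi n by ring2 char2.
have addr_eqE (u v w : F) : (u + v == w) = (u == w + v).
  by rewrite -subr_eq char2_oppr.
have fiber (m n : F) : (phi n == phi m) = (n == m) || (n == m + 1).
  rewrite -subr_eq0 char2_oppr // -phiD (_ : phi _ = (n + m) * (n + m + 1)); last by ring.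
  by rewrite mulf_eq0 !addr_eqE !add0r [1 + m]addrC.
have cardF : #|F| = (#|H| * 2)%N.
  rewrite -[LHS]sum1_card (partition_big (fun m => phi m) (mem H)) => [|m _]; last exact: imset_f.
  rewrite -sum_nat_const; apply: eq_bigr => _ /imsetP[m _ ->].
  rewrite (eq_bigl (mem [set m; m + 1])) => [|n]; last by rewrite !inE fiber.
  by rewrite sum1_card cards2 -{1}[m]addr0 (inj_eq (addrI m)) eq_sym oner_eq0.
pose xH := [set x + h | h in H].
have disjH : H :&: xH = set0.
  apply/setP => z; rewrite !inE; apply/andP => -[/imsetP[a _ ->] /imsetP[_ /imsetP[b _ ->]]].
  by move/eqP; rewrite eq_sym addr_eqE -phiD (negbTE (xH' _)).
have cardxH : #|xH| = #|H| by apply: card_imset; exact: addrI.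
have : y \in H :|: xH.
  suff -> : H :|: xH = setT by rewrite inE.
  apply/eqP; rewrite eqEcard subsetT cardsT cardsU disjH cards0 subn0 cardxH.
  by rewrite cardF muln2 -addnn leqnn.
case/setUP => /imsetP[h hH yE]; first by case/eqP: (yH' h); rewrite yE.
by case/imsetP: hH => m _ hE; exists m; rewrite yE hE; ring2 char2.
Qed.

End ArtinSchreier.

Lemma char2_alg {F : fieldType} {K : fieldExtType F} : (2 : F) = 0 -> (2 : K) = 0.
Proof. by move=> char2; have := congr1 (in_alg K) char2; rewrite rmorph0 rmorph_nat. Qed.

Section QuadraticExtension.
Variables (F : finFieldType) (K : fieldExtType F) (q : nat) (nu : F) (eps : K).
Hypothesis char2 : (2 : F) = 0.
Hypothesis eps_sq : eps ^+ 2 = eps + nu%:A.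
Hypothesis eps_notin_F : forall x : F, eps != x%:A.
Hypothesis dimK : \dim {:K} = 2.
Hypothesis frobF : forall x : F, x ^+ q = x.
Hypothesis frobD : forall x y : K, (x + y) ^+ q = x ^+ q + y ^+ q.
Hypothesis frob_eps : eps ^+ q = eps + 1.

Let char2K : (2 : K) = 0 := char2_alg char2.

Lemma eps_sqA : eps ^+ 2 = eps + in_alg K nu.
Proof. by rewrite in_algE. Qed.

Lemma q_neq0 : q != 0%N.
Proof.
apply/eqP => q0; have eps0 : eps = 0 by apply: (addIr 1); rewrite -frob_eps q0 expr0 add0r.
by have := eps_notin_F 0; rewrite eps0 scale0r eqxx.
Qed.

Definition emb (x0 x1 : F) : K := x0%:A + x1%:A * eps.

Lemma emb00 : emb 0 0 = 0. Proof. by rewrite /emb scale0r mul0r addr0. Qed.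
Lemma emb10 : emb 1 0 = 1. Proof. by rewrite /emb scale0r mul0r addr0 scale1r. Qed.
Lemma emb01 : emb 0 1 = eps. Proof. by rewrite /emb scale0r scale1r mul1r add0r. Qed.

Definition qconj (z : K) := z ^+ q.
Definition qtr (z : K) := z + qconj z.
Definition qnorm (z : K) := z * qconj z.

Lemma qconjD x y : qconj (x + y) = qconj x + qconj y. Proof. exact: frobD. Qed.
Lemma qconjM x y : qconj (x * y) = qconj x * qconj y. Proof. exact: exprMn. Qed.
Lemma qconjX x n : qconj (x ^+ n) = qconj x ^+ n. Proof. exact: exprAC. Qed.
Lemma qconjA x : qconj (in_alg K x) = in_alg K x. Proof. by rewrite /qconj -rmorphXn frobF. Qed.
Lemma qconj1 : qconj 1 = 1. Proof. exact: expr1n. Qed.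
Lemma qconj0 : qconj 0 = 0. Proof. by rewrite /qconj expr0n (negbTE q_neq0). Qed.

Lemma qconj_emb x0 x1 : qconj (emb x0 x1) = emb (x0 + x1) x1.
Proof. by rewrite /emb -!in_algE qconjD qconjM !qconjA [qconj eps]frob_eps; ring. Qed.

Lemma emb_inj x0 x1 y0 y1 : emb x0 x1 = emb y0 y1 -> x0 = y0 /\ x1 = y1.
Proof.
move=> /eqP; rewrite -subr_eq0.
have -> : emb x0 x1 - emb y0 y1 = (x0 - y0)%:A + (x1 - y1)%:A * eps.
  by rewrite /emb -!in_algE; ring.
have [e1|ne1] := eqVneq (x1 - y1) 0.
  rewrite e1 scale0r mul0r addr0 scaler_eq0 oner_eq0 orbF => /eqP e0.
  by split; apply/eqP; rewrite -subr_eq0 ?e0 ?e1.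
rewrite addr_eq0 => /eqP epsE; case/eqP: (eps_notin_F (- (x0 - y0) / (x1 - y1))).
have nz : (x1 - y1)%:A != 0 :> K by rewrite scaler_eq0 oner_eq0 orbF.
by apply: (mulIf nz); rewrite -scalerAl mul1r scalerA divfK // scaleNr epsE opprK mulrC.
Qed.

Lemma embP z : exists x0 x1, z = emb x0 x1.
Proof.
have eps0 : eps != 0 by have := eps_notin_F 0; rewrite scale0r.
have free01 : free [:: 1; eps].
  rewrite free_cons seq1_free eps0 andbT span_seq1; apply/vlineP => -[k].
  case: (eqVneq k 0) => [->|k0]; first by rewrite scale0r; apply/eqP; rewrite oner_eq0.
  move/(congr1 (fun z => k^-1 *: z)); rewrite scalerA mulVf // scale1r => e.
  by case/eqP: (eps_notin_F k^-1); rewrite -e.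
have spanK : span [:: 1; eps] = fullv.
  by apply: span_basis; rewrite basisEfree free01 subvf dimK.
have := memvf z; rewrite -spanK span_cons span_seq1.
case/memv_addP => _ /vlineP[x0 ->] [_ /vlineP[x1 ->] ->].
by exists x0, x1; rewrite /emb mulr_algl.
Qed.

Lemma qconjK z : qconj (qconj z) = z.
Proof.
have [x0 [x1 ->]] := embP z.
by rewrite !qconj_emb /emb -!in_algE; ring2 char2K.
Qed.

Lemma qtr_emb x0 x1 : qtr (emb x0 x1) = x1%:A.
Proof. by rewrite /qtr qconj_emb /emb -!in_algE; ring2 char2K. Qed.

Lemma qtrD x y : qtr (x + y) = qtr x + qtr y.
Proof. by rewrite /qtr qconjD addrACA. Qed.

Lemma qtr_nondeg z : qtr z = 0 -> qtr (eps * z) = 0 -> z = 0.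
Proof.
move=> /char2_addr_eq0-/(_ char2K) fix_z <-.
by rewrite /qtr qconjM -fix_z [qconj eps]frob_eps; ring2 char2K.
Qed.

Lemma inA_eq0 (x : F) : (x%:A = 0 :> K) -> x = 0.
Proof. by move/eqP; rewrite scaler_eq0 oner_eq0 orbF => /eqP. Qed.

(* [Y * qconj Y' + qconj Y * Y'] is the determinant of the coordinates of Y, Y'. *)
Lemma qdet_eq0_dependent (Y Y' : K) : Y * qconj Y' + qconj Y * Y' = 0 ->
  exists2 st : F * F, st != (0, 0) & st.1%:A * Y + st.2%:A * Y' = 0.
Proof.
have [p0 [p1 ->]] := embP Y; have [r0 [r1 ->]] := embP Y'.
rewrite !qconj_emb (_ : _ + _ = (p0 * r1 + p1 * r0)%:A); last first.
  by rewrite /emb -!in_algE; ring2 char2K : eps_sqA.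
move/inA_eq0/(char2_addr_eq0 char2)/(congr1 (in_alg K)); rewrite !rmorphM => det0.
have [/eqP|nz] := eqVneq (r1, p1) (0, 0); last first.
  by exists (r1, p1) => //; rewrite /emb -!in_algE; ring2 char2K : det0.
rewrite xpair_eqE => /andP[/eqP r10 /eqP p10].
have [/eqP|nz] := eqVneq (r0, p0) (0, 0); last first.
  by exists (r0, p0) => //; rewrite /emb r10 p10 -!in_algE; ring2 char2K.
rewrite xpair_eqE => /andP[_ /eqP p00].
exists (1, 0); first by rewrite xpair_eqE oner_eq0.
by rewrite /= /emb p00 p10 -!in_algE rmorph0; ring.
Qed.

Lemma qtr_sq_eq0 (k Y Y' : K) : qtr (k * Y ^+ 2) = 0 -> qtr (k * Y' ^+ 2) = 0 ->
  Y * qconj Y' + qconj Y * Y' != 0 -> k = 0.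
Proof.
move=> trY trY' det.
have : k * (Y * qconj Y' + qconj Y * Y') ^+ 2 =
    qconj Y' ^+ 2 * qtr (k * Y ^+ 2) + qconj Y ^+ 2 * qtr (k * Y' ^+ 2).
  by rewrite /qtr !qconjM ?qconjX; ring2 char2K.
rewrite trY trY' !mulr0 addr0 => /eqP.
by rewrite mulf_eq0 expf_eq0 (negbTE det) andbF orbF => /eqP.
Qed.

Lemma qnorm_factor (A C m w0 w1 : F) : m ^+ 2 + m = A * C + nu ->
  qnorm ((A * w0)%:A + (m%:A + eps) * w1%:A) =
  A%:A * (A * w0 ^+ 2 + w0 * w1 + C * w1 ^+ 2)%:A.
Proof.
move=> ASm; have : m ^+ 2 = m + (A * C + nu) by rewrite -ASm; ring2 char2.
move/(congr1 (in_alg K)); rewrite rmorphXn => mK.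
rewrite /qnorm -!in_algE !(qconjD, qconjM, qconjA) [qconj eps]frob_eps.
ring2 char2K : eps_sqA mK.
Qed.

Lemma frob_dot (L : 'rV[K]_4) (w : 'rV[F]_4) :
  (frob q L *m (map_mx (in_alg K) w)^T) ord0 ord0 =
  qconj ((map_mx (in_alg K) w *m L^T) ord0 ord0).
Proof.
rewrite !mxE (big_morph qconj qconjD qconj0); apply: eq_bigr => j _.
by rewrite !mxE qconjM qconjA mulrC.
Qed.

Lemma qtr_sq_emb a0 a1 x0 x1 :
  qtr (emb a0 a1 * emb x0 x1 ^+ 2) + qnorm (emb x0 x1) =
  ((a1 + 1) * x0 ^+ 2 + x0 * x1 + (a0 + (1 + nu) * a1 + nu) * x1 ^+ 2)%:A.
Proof.
by rewrite /qtr /qnorm !qconjM ?qconjX !qconj_emb /emb -!in_algE; ring2 char2K : eps_sqA.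
Qed.

Lemma qtr_mul3_emb c0 c1 x0 x1 y0 y1 :
  qtr (emb c0 c1 * emb x0 x1 * emb y0 y1) =
  (c1 * x0 * y0 + (c0 + c1) * x0 * y1 + (c0 + c1) * x1 * y0 + (c0 + (1 + nu) * c1) * x1 * y1)%:A.
Proof. by rewrite /qtr !qconjM !qconj_emb /emb -!in_algE; ring2 char2K : eps_sqA. Qed.

Definition vecX (v : 'rV[F]_4) := emb (v ord0 o0) (v ord0 o1).
Definition vecY (v : 'rV[F]_4) := emb (v ord0 o2) (v ord0 o3).

Lemma vecXD u v : vecX (u + v) = vecX u + vecX v.
Proof. by rewrite /vecX /emb !mxE -!in_algE; ring. Qed.
Lemma vecYD u v : vecY (u + v) = vecY u + vecY v.
Proof. by rewrite /vecY /emb !mxE -!in_algE; ring. Qed.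
Lemma vecXZ s v : vecX (s *: v) = s%:A * vecX v.
Proof. by rewrite /vecX /emb !mxE -!in_algE; ring. Qed.
Lemma vecYZ s v : vecY (s *: v) = s%:A * vecY v.
Proof. by rewrite /vecY /emb !mxE -!in_algE; ring. Qed.

Lemma vec_inj u v : vecX u = vecX v -> vecY u = vecY v -> u = v.
Proof.
move=> /emb_inj[e0 e1] /emb_inj[e2 e3]; apply/rowP => -[[|[|[|[|//]]]] j4];
by rewrite (bool_irrelevance j4 isT).
Qed.

Lemma vec0 : vecX 0 = 0 /\ vecY 0 = 0.
Proof. by rewrite /vecX /vecY !mxE emb00. Qed.

Section TraceForm.
Variables (a b c : K).

Definition xi (X Y : K) := qtr (a * X ^+ 2 + b * Y ^+ 2 + c * X * Y) + qnorm X + qnorm Y.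
Definition xi_alpha (X Y : K) := c * Y + qconj X.
Definition xi_beta (X Y : K) := c * X + qconj Y.
Definition xi_kappa := b + qconj a * c ^+ 2.

Lemma xi_polar X Y X' Y' : xi (X + X') (Y + Y') =
  xi X Y + xi X' Y' + qtr (X' * xi_alpha X Y + Y' * xi_beta X Y).
Proof. by rewrite /xi /xi_alpha /xi_beta /qtr /qnorm !(qconjD, qconjM) !qconjK; ring2 char2K. Qed.

Lemma xi_X0 W : xi W 0 = qtr (a * W ^+ 2) + qnorm W.
Proof. by rewrite /xi /qnorm expr0n !mulr0 mul0r !addr0. Qed.

Lemma xi_alphaZD (s t : F) X Y X' Y' :
  xi_alpha (s%:A * X + t%:A * X') (s%:A * Y + t%:A * Y') =
  s%:A * xi_alpha X Y + t%:A * xi_alpha X' Y'.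
Proof. by rewrite /xi_alpha qconjD !qconjM -!in_algE !qconjA; ring. Qed.

Lemma xi_alpha_eq0 X Y : xi_alpha X Y = 0 -> qconj X = c * Y.
Proof. by move/(char2_addr_eq0 char2K). Qed.

Lemma xi_beta_eq0 X Y : xi_beta X Y = 0 -> qconj Y = c * X.
Proof. by move/(char2_addr_eq0 char2K). Qed.

Lemma xi_radical_qnorm X Y : xi_alpha X Y = 0 -> xi_beta X Y = 0 -> Y != 0 ->
  qnorm c = 1.
Proof.
move=> /xi_alpha_eq0 cjX /xi_beta_eq0 cjY Y0; apply: (mulIf Y0).
by rewrite mul1r -{2}(qconjK Y) cjY qconjM cjX /qnorm; ring.
Qed.

Lemma xi_radical X Y : xi_alpha X Y = 0 -> xi_beta X Y = 0 -> qnorm c = 1 ->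
  xi X Y = qtr (xi_kappa * Y ^+ 2).
Proof.
move=> /xi_alpha_eq0 cjX /xi_beta_eq0 cjY; rewrite /qnorm => nc.
rewrite /xi /xi_kappa /qtr /qnorm !(qconjD, qconjM) !qconjK ?qconjX cjX cjY.
ring2 char2K : nc.
Qed.

Lemma xi_split X Y : qnorm c = 1 -> xi_kappa = 0 ->
  xi X Y = xi (X + qconj c * qconj Y) 0.
Proof.
rewrite /qnorm => nc /(char2_addr_eq0 char2K) bE.
have cjbE : qconj b = a * qconj c ^+ 2 by rewrite bE qconjM qconjX qconjK.
rewrite xi_X0 /xi /qtr /qnorm !(qconjD, qconjM) !qconjK ?qconjX cjbE bE.
ring2 char2K : nc.
Qed.

End TraceForm.

Arguments xi_radical_qnorm {c X Y}.
Arguments xi_radical {a b c X Y}.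
Arguments xi_split {a b c X Y}.

Section XiForm.
Variables (a0 a1 b0 b1 c0 c1 : F).
Local Notation a := (emb a0 a1).
Local Notation b := (emb b0 b1).
Local Notation c := (emb c0 c1).
Local Notation Xi := (Xi_mx nu a0 a1 b0 b1 c0 c1).

Lemma qform_Xi v : (qform Xi v)%:A = xi a b c (vecX v) (vecY v).
Proof.
rewrite /xi !qtrD [RHS](_ : _ = (qtr (a * vecX v ^+ 2) + qnorm (vecX v)) +
  (qtr (b * vecY v ^+ 2) + qnorm (vecY v)) + qtr (c * vecX v * vecY v)); last by ring.
rewrite /vecX /vecY !qtr_sq_emb qtr_mul3_emb -!scalerDl.
by rewrite /qform mxE big_ord4 !mxE !big_ord4 !mxE /=; congr (_%:A); ring.
Qed.

Lemma polar_Xi u v : ((u *m (Xi + Xi^T) *m v^T) ord0 ord0)%:A =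
  qtr (vecX v * xi_alpha c (vecX u) (vecY u) + vecY v * xi_beta c (vecX u) (vecY u)).
Proof.
apply: (@addrI _ ((qform Xi u)%:A + (qform Xi v)%:A)).
by rewrite -!scalerDl -qformD !qform_Xi vecXD vecYD xi_polar scalerDl !qform_Xi.
Qed.

Lemma Xi_radical_eqs {u} : u *m (Xi + Xi^T) = 0 ->
  xi_alpha c (vecX u) (vecY u) = 0 /\ xi_beta c (vecX u) (vecY u) = 0.
Proof.
move=> rad; have polar0 v : qtr (vecX v * xi_alpha c (vecX u) (vecY u) +
                                 vecY v * xi_beta c (vecX u) (vecY u)) = 0.
  by rewrite -polar_Xi rad mul0mx mxE scale0r.
have := polar0 (delta_mx 0 o0); have := polar0 (delta_mx 0 o1).
have := polar0 (delta_mx 0 o2); have := polar0 (delta_mx 0 o3).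
rewrite /vecX /vecY !mxE /= emb10 emb01 emb00 !mul0r !mul1r ?add0r ?addr0.
by move=> tr_eps_beta tr_beta tr_eps_alpha tr_alpha; split; apply: qtr_nondeg.
Qed.

Lemma Xi_radical_eq0 {z} : xi_alpha c (vecX z) (vecY z) = 0 -> vecY z = 0 -> z = 0.
Proof.
move=> /xi_alpha_eq0 cjX Y0; have [X00 Y00] := vec0.
apply: vec_inj; rewrite ?X00 ?Y00 //.
by move: cjX; rewrite Y0 mulr0 => /eqP; rewrite expf_eq0 => /andP[_ /eqP].
Qed.

Lemma Xi_isotropic_radical {u w} :
  (forall s t : F, s *: u + t *: w = 0 -> s = 0 /\ t = 0) ->
  u *m (Xi + Xi^T) = 0 -> w *m (Xi + Xi^T) = 0 -> qform Xi u = 0 -> qform Xi w = 0 ->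
  qnorm c = 1 /\ xi_kappa a b c = 0.
Proof.
move=> indep radu radw qu qw.
have [au bu] := Xi_radical_eqs radu; have [aw bw] := Xi_radical_eqs radw.
have Yu0 : vecY u != 0.
  apply/eqP => /(Xi_radical_eq0 au) u0; have [] := indep 1 0.
    by rewrite u0 scaler0 scale0r addr0.
  by move/eqP; rewrite oner_eq0.
have nc := xi_radical_qnorm au bu Yu0; split=> //.
have det : vecY u * qconj (vecY w) + qconj (vecY u) * vecY w != 0.
  apply/eqP => /qdet_eq0_dependent[[s t] /= st0 comb].
  suff /indep[s0 t0] : s *: u + t *: w = 0 by move: st0; rewrite s0 t0 eqxx.
  apply: Xi_radical_eq0; last by rewrite vecYD !vecYZ.
  by rewrite vecXD vecYD !vecXZ !vecYZ xi_alphaZD au aw !mulr0 addr0.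
apply: (qtr_sq_eq0 _ _ _ _ _ det).
  by rewrite -(xi_radical au bu nc) -qform_Xi qu scale0r.
by rewrite -(xi_radical aw bw nc) -qform_Xi qw scale0r.
Qed.

Lemma Xi_anisotropic {d e f : K} : qnorm c = 1 -> xi_kappa a b c = 0 ->
  (forall v : 'rV[K]_4, v != 0 -> pcoord v 0 = 0 -> herm_eval q v = 0 ->
     qform (Q_mx a b c d e f) v = 0 -> exists mu : K, v = mu *: P_inf K) ->
  forall W, xi a b c W 0 = 0 -> W = 0.
Proof.
rewrite /qnorm => nc /(char2_addr_eq0 char2K) bE onlyPinf W xiW.
have [//|W0] := eqVneq W 0; exfalso.
have cW0 : c * W != 0.
  by rewrite mulf_neq0 //; apply: contra_eq_neq nc => ->; rewrite mul0r eq_sym oner_neq0.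
pose v : 'rV[K]_4 := \row_j [:: 0; c * W; qconj W; 0]`_j.
have [mu /rowP/(_ o1)] : exists mu, v = mu *: P_inf K.
  apply: onlyPinf.
  - by apply/eqP => /rowP/(_ o1)/eqP; rewrite !mxE (negbTE cW0).
  - by rewrite /pcoord mxE inordK.
  - have normE x : x ^+ q.+1 = x * qconj x by rewrite exprS.
    rewrite /herm_eval /pcoord !mxE !inordK //= mulr0 mul0r add0r !normE qconjM qconjK.
    ring2 char2K : nc.
  - rewrite qform_Q !mxE /= -[RHS](mulr0 (c ^+ 2)) -[in RHS]xiW xi_X0 /qtr /qnorm.
    by rewrite qconjM qconjX bE; ring2 char2K.
by rewrite !mxE /= mulr0; apply/eqP.
Qed.

(* The rows are the radical vectors (c^q Y^q, Y) for Y = 1 and Y = eps. *)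
Definition Xi_line : 'M[F]_(2, 4) :=
  \matrix_(i, j)
    (nth [::] [:: [:: c0 + c1; c1; 1; 0]; [:: c0 + (1 + nu) * c1; c0 + c1; 0; 1]] i)`_j.

Lemma Xi_line_vec (z : 'rV[F]_2) :
  vecY (z *m Xi_line) = emb (z ord0 ord0) (z ord0 ord_max) /\
  vecX (z *m Xi_line) = qconj c * qconj (vecY (z *m Xi_line)).
Proof.
have -> : vecY (z *m Xi_line) = emb (z ord0 ord0) (z ord0 ord_max).
  rewrite /vecY !mxE !big_ord_recl !big_ord0 !mxE /=.
  by rewrite (_ : lift ord0 ord0 = ord_max) /emb -?in_algE; [ring | apply: val_inj].
split=> //; rewrite !qconj_emb /vecX !mxE !big_ord_recl !big_ord0 !mxE /=.
rewrite (_ : lift ord0 ord0 = ord_max); last exact: val_inj.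
by rewrite /emb -!in_algE; ring2 char2K : eps_sqA.
Qed.

Lemma Xi_points_line : qnorm c = 1 -> xi_kappa a b c = 0 ->
  (forall W, xi a b c W 0 = 0 -> W = 0) -> points_form_line Xi.
Proof.
move=> nc k0 aniso; exists Xi_line; split.
  apply/eqP; apply/row_freeP; exists (\matrix_(j, i) (j == i.+2 :> nat)%:R).
  apply/matrixP => i j; rewrite !mxE big_ord4 !mxE.
  by case: i => [[|[|//]] ?]; case: j => [[|[|//]] ?] /=; ring.
move=> v; have zeroE : qform Xi v = 0 <-> vecX v = qconj c * qconj (vecY v).
  split=> [v0 | XE].
    have : xi a b c (vecX v + qconj c * qconj (vecY v)) 0 = 0.
      by rewrite -xi_split // -qform_Xi v0 scale0r.
    by move/aniso/(char2_addr_eq0 char2K).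
  apply: inA_eq0; rewrite qform_Xi (xi_split nc k0) XE (_ : _ + _ = 0); last by ring2 char2K.
  by rewrite xi_X0 /qtr /qnorm expr0n /= mulr0 qconj0 mulr0 !addr0.
rewrite zeroE; split=> [XE|/submxP[z ->]]; last by case: (Xi_line_vec z).
apply/submxP; exists (\row_i [:: v ord0 o2; v ord0 o3]`_i).
have [vY vX] := Xi_line_vec (\row_i [:: v ord0 o2; v ord0 o3]`_i).
have vYE : vecY (\row_i [:: v ord0 o2; v ord0 o3]`_i *m Xi_line) = vecY v by rewrite vY !mxE.
by apply: vec_inj; rewrite ?vX vYE.
Qed.

Lemma xi_emb0 w0 w1 : xi a b c (emb w0 w1) 0 =
  ((a1 + 1) * w0 ^+ 2 + w0 * w1 + (a0 + (1 + nu) * a1 + nu) * w1 ^+ 2)%:A.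
Proof. by rewrite xi_X0 qtr_sq_emb. Qed.

Lemma xi0_anisotropic_coeffs : (forall W, xi a b c W 0 = 0 -> W = 0) ->
  a1 + 1 != 0 /\ forall m, (a1 + 1) * (a0 + (1 + nu) * a1 + nu) != m ^+ 2 + m.
Proof.
move=> aniso; set A := a1 + 1; set C := a0 + _ + nu.
have A0 : A != 0.
  apply: contra_neq (@oner_neq0 K) => A0; rewrite -emb10; apply: aniso.
  by rewrite xi_emb0 -/A A0 expr0n /= !(mul0r, mulr0, add0r, addr0) scale0r.
split=> // m; apply/eqP => ACm; have /emb_inj[_ /eqP] : emb m A = emb 0 0.
  rewrite emb00; apply: aniso; rewrite xi_emb0 -/A -/C.
  by rewrite (_ : _ + _ = 0) ?scale0r //; ring2 char2 : ACm.
by rewrite (negbTE A0).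
Qed.

Lemma Xi_conj_planes {m : F} : qnorm c = 1 -> xi_kappa a b c = 0 ->
  (forall W, xi a b c W 0 = 0 -> W = 0) ->
  m ^+ 2 + m = (a1 + 1) * (a0 + (1 + nu) * a1 + nu) + nu -> conj_planes_pair K q Xi.
Proof.
move=> nc k0 aniso ASm; set A := a1 + 1 in ASm *.
have [A0 _] := xi0_anisotropic_coeffs aniso.
pose t := m%:A + eps; pose ell W := A%:A * W + (t + A%:A * eps) * qtr W.
have ell_emb w0 w1 : ell (emb w0 w1) = (A * w0)%:A + t * w1%:A.
  by rewrite /ell qtr_emb /t /emb -!in_algE; ring2 char2K.
have ell_norm W : qnorm (ell W) = A%:A * xi a b c W 0.
  by have [w0 [w1 ->]] := embP W; rewrite ell_emb xi_emb0 (qnorm_factor _ _ _ _ _ ASm).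
pose L : 'rV[K]_4 := \row_j [:: ell 1; ell eps; ell (qconj c); ell (qconj c * qconj eps)]`_j.
have L_dot w : (map_mx (in_alg K) w *m L^T) ord0 ord0 =
               ell (vecX w + qconj c * qconj (vecY w)).
  rewrite !mxE big_ord4 !mxE /= /ell /qtr /vecX /vecY /emb -!in_algE.
  by rewrite !(qconjD, qconjM) !qconjA !qconjK qconj1; ring.
have invA : (A^-1)%:A * A%:A = 1 :> K by rewrite -scalerAl mul1r scalerA mulVf ?scale1r.
exists L, (A^-1)%:A; split; first by rewrite scaler_eq0 oner_eq0 orbF invr_eq0.
split.
  apply: (@form_eq_map _ _ (in_alg K)) => w.
  rewrite [X in qform X _](_ : _ = map_mx (in_alg K) Xi) // qform_map.
  rewrite -[LHS]/((qform Xi w)%:A) qform_Xi.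
  by rewrite (xi_split nc k0) qform_rank1 frob_dot L_dot -/(qnorm _) ell_norm mulrA invA mul1r.
have ell1 : ell 1 = A%:A by rewrite -[in LHS]emb10 ell_emb mulr1 scale0r mulr0 addr0.
have ell_eps : ell eps = t by rewrite -emb01 ell_emb mulr0 scale0r add0r scale1r mulr1.
case=> mu /rowP Lprop; move: (Lprop o0) (Lprop o1); rewrite !mxE /= ell1 ell_eps.
rewrite -!/(qconj _) -in_algE qconjA => A_mu.
have A0K : in_alg K A != 0 by rewrite fmorph_eq0.
have -> : mu = 1 by apply: (mulIf A0K); rewrite mul1r -A_mu.
rewrite mul1r /t qconjD -in_algE qconjA [qconj eps]frob_eps addrA -[RHS]addr0.
by move/addrI/eqP; rewrite oner_eq0.
Qed.

Lemma Xi_rank2_planes_line (d e f : K) :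
  (forall v : 'rV[K]_4, v != 0 -> pcoord v 0 = 0 -> herm_eval q v = 0 ->
     qform (Q_mx a b c d e f) v = 0 -> exists mu : K, v = mu *: P_inf K) ->
  (exists M : 'M[F]_4, M \in unitmx /\ nvars (M *m Xi *m M^T) = 2%N) ->
  (forall m, nu != m ^+ 2 + m) ->
  conj_planes_pair K q Xi /\ points_form_line Xi.
Proof.
move=> onlyPinf [M [unitM rank2]] nu_AS.
have [u [w [indep [radu qu] [radw qw]]]] := rank2_radical_pair unitM (congr1 (addn^~ 2%N) rank2).
have [nc k0] := Xi_isotropic_radical indep radu radw qu qw.
have aniso := Xi_anisotropic nc k0 onlyPinf.
have [_ disc_AS] := xi0_anisotropic_coeffs aniso.
have [m ASm] := artin_schreier_add char2 disc_AS nu_AS.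
by split; [exact: Xi_conj_planes nc k0 aniso (esym ASm) | exact: Xi_points_line nc k0 aniso].
Qed.

End XiForm.

End QuadraticExtension.

Arguments Xi_rank2_planes_line {F K q nu eps} char2 eps_sq eps_notin_F dimK frobF frobD frob_eps
  {a0 a1 b0 b1 c0 c1 d e f}.

Lemma exp2_root {F : fieldType} {K : fieldExtType F} {nu : F} {eps : K} k :
  (2 : F) = 0 -> eps ^+ 2 = eps + nu%:A ->
  eps ^+ (2 ^ k) = eps + (\sum_(i < k) nu ^+ (2 ^ i))%:A.
Proof.
move=> char2 eps_sq; have char2K : (2 : K) = 0 := char2_alg char2.
elim: k => [|k IH]; first by rewrite big_ord0 scale0r addr0 expr1.
rewrite expnSr exprM IH char2_sqrD // eps_sq -!in_algE -rmorphXn -addrA -rmorphD.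
congr (_ + in_alg K _); rewrite big_ord_recl expr1.
rewrite (big_morph (fun x => x ^+ 2) (char2_sqrD char2) (expr0n _ 2)).
by congr (_ + _); apply: eq_bigr => i _; rewrite -exprM -expnSr.
Qed.

Lemma trace1_not_artin_schreier (F : finFieldType) h (nu : F) :
  (2 : F) = 0 -> #|F| = (2 ^ h)%N -> \sum_(i < h) nu ^+ (2 ^ i) = 1 ->
  forall m, nu != m ^+ 2 + m.
Proof.
move=> char2 cardF trace1 m; apply/eqP => nuE; move: trace1.
rewrite (eq_bigr (fun i : 'I_h => m ^+ (2 ^ i.+1) - m ^+ (2 ^ i))) => [|i _]; last first.
  by rewrite nuE char2_exp2D // -exprM -expnS char2_oppr.
rewrite -(big_mkord xpredT (fun i => m ^+ (2 ^ i.+1) - m ^+ (2 ^ i))) telescope_sumr //.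
by rewrite expn0 expr1 -cardF expf_card subrr => /eqP; rewrite eq_sym oner_eq0.
Qed.

Theorem lemma6 (h : nat) (F : finFieldType) (K : fieldExtType F)
    (nu : F) (eps : K) (a0 a1 b0 b1 c0 c1 : F) (d e f : K) :
  (0 < h)%N ->
  #|F| = (2 ^ h)%N ->
  \dim {:K} = 2%N ->
  nu != 1 ->
  \sum_(i < h) nu ^+ (2 ^ i) = 1 ->
  (forall x : F, eps != x%:A) ->
  eps ^+ 2 + eps + nu%:A = 0 ->
  let q := (2 ^ h)%N in
  let a := a0%:A + a1%:A * eps in
  let b := b0%:A + b1%:A * eps in
  let c := c0%:A + c1%:A * eps in
  hyperbolic_quadric (Q_mx a b c d e f) ->
  (forall v : 'rV[K]_4, v != 0 -> pcoord v 0 = 0 -> herm_eval q v = 0 ->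
     qform (Q_mx a b c d e f) v = 0 -> exists mu : K, v = mu *: P_inf K) ->
  qf_rank_is (Xi_mx nu a0 a1 b0 b1 c0 c1) 2 ->
  conj_planes_pair K q (Xi_mx nu a0 a1 b0 b1 c0 c1) /\
  points_form_line (Xi_mx nu a0 a1 b0 b1 c0 c1).
Proof.
move=> _ cardF dimK _ trace1 eps_notin eps_eq q a b c _ onlyPinf [rank2 _].
have char2 : (2 : F) = 0 by have := pcharf0 (card_finPcharP cardF (isT : prime 2)).
have char2K : (2 : K) = 0 := char2_alg char2.
have eps_sq : eps ^+ 2 = eps + nu%:A by apply: (char2_addr_eq0 char2K); rewrite addrA.
have frobF (x : F) : x ^+ q = x by rewrite /q -cardF expf_card.
have frob_eps : eps ^+ q = eps + 1 by rewrite (exp2_root _ char2 eps_sq) trace1 scale1r.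
have nu_AS := trace1_not_artin_schreier _ _ _ char2 cardF trace1.
exact: (Xi_rank2_planes_line char2 eps_sq eps_notin dimK frobF (char2_exp2D char2K h) frob_eps
          onlyPinf rank2 nu_AS).
Qed.
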